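(* Let $t$ be a rooted tree with vertex set $I$ and $t'$ a rooted tree with vertex set $I'$. The intervals $[\widehat{0},t]$ in $\Pi_{\operatorname{NAP}}(I)$ and $[\widehat{0},t']$ in $\Pi_{\operatorname{NAP}}(I')$ are isomorphic posets if and only if $t$ and $t'$ have the same underlying unlabeled rooted tree (i.e. are isomorphic as rooted trees). Consequently the coinvariants of $\operatorname{NAP}$ are in bijection with the isomorphism classes of the posets $[\widehat{0},t]$, $t$ a rooted tree.
   Context: $\operatorname{NAP}(I)$ is the set of rooted trees with vertex set $I$; its coinvariants $\operatorname{NAP}(n)_{\mathfrak{S}_n}$ are the unlabeled rooted trees with $n$ vertices. $\Pi_{\operatorname{NAP}}(I)$ is the set of forests of rooted trees whose vertex set is exactly $I$, partially ordered as follows: $y$ covers $x$ iff $y$ is obtained from $x$ by adding an edge from the root of one component of $x$ to the root of another component (the latter root remaining the root); $\leq$ is the reflexive–transitive closure. $\widehat{0}$ is the forest of one-vertex trees. *)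

From Stdlib Require Import Relations.
From mathcomp Require Import all_boot.
Set Implicit Arguments. Unset Strict Implicit. Unset Printing Implicit Defensive.

(* A forest of rooted trees on the finite vertex set I is encoded by its
   parent function: p v = Some w means w is the parent of v, p v = None
   means v is a root.  Acyclicity: iterating the parent map from any vertex
   eventually reaches "None" (i.e. passes through a root). *)
Definition pfun (I : finType) := {ffun I -> option I}.

Definition is_forest (I : finType) (p : pfun I) : Prop :=
  forall v : I, exists k : nat, iter k (obind p) (Some v) = None.

Definition roots (I : finType) (p : pfun I) : {set I} := [set v | p v == None].

Definition is_rooted_tree (I : finType) (p : pfun I) : Prop :=
  is_forest p /\ #|roots p| = 1.

Definition hat0 (I : finType) : pfun I := [ffun _ => None].

Definition nap_cover (I : finType) (x y : pfun I) : Prop :=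
  is_forest x /\
  exists a b : I, [/\ a != b, x a = None, x b = None &
    y = [ffun v => if v == a then Some b else x v]].

Definition nap_le (I : finType) : relation (pfun I) :=
  clos_refl_trans (pfun I) (@nap_cover I).

Definition in_interval (I : finType) (t x : pfun I) : Prop :=
  is_forest x /\ nap_le (hat0 I) x /\ nap_le x t.

Definition interval_iso (I I' : finType) (t : pfun I) (t' : pfun I') : Prop :=
  exists (f : pfun I -> pfun I') (g : pfun I' -> pfun I),
    [/\ (forall x, in_interval t x -> in_interval t' (f x) /\ g (f x) = x),
        (forall y, in_interval t' y -> in_interval t (g y) /\ f (g y) = y) &
        (forall x y, in_interval t x -> in_interval t y ->
           (nap_le x y <-> nap_le (f x) (f y)))].

Definition rooted_tree_iso (I I' : finType) (t : pfun I) (t' : pfun I') : Prop :=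
  exists s : I -> I', bijective s /\ forall v : I, t' (s v) = omap s (t v).

From Stdlib Require Import Relations.
From mathcomp Require Import all_boot boolp.
Set Implicit Arguments. Unset Strict Implicit. Unset Printing Implicit Defensive.

(* The interval [hat0, t] consists of the prunings of t: the forests obtained
   by deleting a set of edges of t that is closed towards the roots, ordered by
   inclusion of their edge sets.  Its join-irreducible elements are the
   branches of t, the subtree at a non-root vertex v together with the edge
   from v to its parent, and branch u <= branch v iff u lies below v.  An
   isomorphism of intervals therefore induces an ancestry-preserving bijection
   of the non-root vertices; sending root to root, it preserves parents, as the
   parent of v is its least strict ancestor.  Conversely, an isomorphism of
   rooted trees relabels prunings. *)

Section Ancestry.
Variables (I : finType) (t : pfun I).

Definition below (u v : I) : Prop := exists k, iter k (obind t) (Some u) = Some v.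

Lemma iter_obind_None k : iter k (obind t) None = None.
Proof. by elim: k => //= k ->. Qed.

Lemma below_refl u : below u u.
Proof. by exists 0. Qed.

Lemma below_trans u v w : below u v -> below v w -> below u w.
Proof. by move=> [a Ha] [b Hb]; exists (b + a); rewrite iterD Ha. Qed.

Lemma below_parent u w : t u = Some w -> below u w.
Proof. by exists 1. Qed.

Lemma below_first_step u v : below u v -> u <> v -> exists2 w, t u = Some w & below w v.
Proof.
move=> [[|k] Hk] Nuv; first by case: Hk.
move: Hk; rewrite iterSr /=; case: (t u) => [w Hk|]; last by rewrite iter_obind_None.
by exists w => //; exists k.
Qed.

Lemma below_from_root r u : t r = None -> below r u -> u = r.
Proof.
move=> Hr Hru; case: (eqVneq u r) => // /eqP Nur.
by have [w] := below_first_step Hru (nesym Nur); rewrite Hr.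
Qed.

Hypothesis forest_t : is_forest t.

Lemma parent_neq u : t u <> Some u.
Proof.
move=> Huu; have [k] := forest_t u.
by suff -> : iter k (obind t) (Some u) = Some u by []; elim: k => //= k ->.
Qed.

Lemma below_anti u v : below u v -> below v u -> u = v.
Proof.
move=> [a Ha] [b Hb]; case: (posnP (b + a)) => [/eqP|ab_gt0].
  by rewrite addn_eq0 => /andP[_ /eqP a0]; move: Ha; rewrite a0 => -[].
have cycle n : iter (n * (b + a)) (obind t) (Some u) = Some u.
  by elim: n => // n IH; rewrite mulSn !iterD IH Ha Hb.
have [k Hk] := forest_t u.
have : iter (k * (b + a)) (obind t) (Some u) = None.
  by rewrite -(subnK (leq_pmulr k ab_gt0)) iterD Hk iter_obind_None.
by rewrite cycle.
Qed.

Lemma topmost_below (P : I -> Prop) v :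
  P v -> exists u, [/\ below v u, P u & forall w, t u = Some w -> ~ P w].
Proof.
have [k] := forest_t v; elim: k v => // k IH v; rewrite iterSr /=.
case Ev: (t v) => [w|] Hk Pv; last first.
  by exists v; split=> // [|w]; [exact: below_refl | rewrite Ev].
case: (pselect (P w)) => [Pw|NPw].
  have [u [Hwu Pu Hu]] := IH w Hk Pw.
  by exists u; split=> //; apply: below_trans (below_parent Ev) Hwu.
by exists v; split=> // [|w']; [exact: below_refl | rewrite Ev => -[<-]].
Qed.

Lemma parentE v w :
  t v = Some w <-> [/\ below v w, v <> w & forall u, below v u -> u <> v -> below w u].
Proof.
split=> [Hvw|[Hvw Nvw Hmin]].
  split=> [||u Hvu Nuv]; first exact: below_parent.
    by move=> Evw; apply: (@parent_neq v); rewrite {2}Evw.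
  have [w' Hw' Hw'u] := below_first_step Hvu (nesym Nuv).
  by move: Hw'; rewrite Hvw => -[->].
have [w' Hw' Hw'w] := below_first_step Hvw Nvw.
rewrite Hw'; congr Some; apply: below_anti Hw'w _; apply: Hmin (below_parent Hw') _.
by move=> Ew'v; apply: (@parent_neq v); rewrite -{2}Ew'v.
Qed.

End Ancestry.

Section Pruning.
Variable I : finType.
Implicit Types x y t : pfun I.

Definition pruned x y : Prop :=
  (forall v, x v = None \/ x v = y v) /\
  (forall v w, y v = Some w -> x v = None -> x w = None).

Definition detach x (u : I) : pfun I := [ffun v => if v == u then None else x v].

Lemma pruned_refl x : pruned x x.
Proof. by split=> [v|v w ->]; [right|]. Qed.

Lemma pruned_trans x y z : pruned x y -> pruned y z -> pruned x z.
Proof.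
move=> [Sxy Cxy] [Syz Cyz]; split=> [v|v w Hzv Hxv].
  by case: (Sxy v) => ->; [left|case: (Syz v) => ->; [left|right]].
case Hyv: (y v) => [w'|]; last by case: (Sxy w) => // ->; apply: Cyz Hzv Hyv.
case: (Syz v) => Eyz; first by rewrite Eyz in Hyv.
by move: Hzv; rewrite -Eyz Hyv => -[<-]; apply: Cxy Hyv Hxv.
Qed.

Lemma pruned_anti x y : pruned x y -> pruned y x -> x = y.
Proof.
move=> [Sxy _] [Syx _]; apply/ffunP => v.
by case: (Sxy v) (Syx v) => -> // [].
Qed.

Lemma pruned_sub x t v : pruned x t -> x v <> None -> x v = t v.
Proof. by move=> [S _] Hxv; case: (S v). Qed.

Lemma nap_cover_pruned x y : nap_cover x y -> pruned x y.
Proof.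
move=> [_ [a [b [_ Ha Hb ->]]]]; split=> [v|v w]; rewrite ffunE.
  by case: eqP => [->|_]; [left|right].
by case: eqP => [-> [<-]|_ ->].
Qed.

Lemma nap_le_pruned x y : nap_le x y -> pruned x y.
Proof.
elim=> [? ? /nap_cover_pruned //|?|? ? ? _ Hxy _ Hyz]; first exact: pruned_refl.
exact: pruned_trans Hxy Hyz.
Qed.

Lemma nap_le_anti x y : nap_le x y -> nap_le y x -> x = y.
Proof. by move=> /nap_le_pruned Hxy /nap_le_pruned Hyx; apply: pruned_anti. Qed.

Lemma sub_forest x y : (forall v, x v = None \/ x v = y v) -> is_forest y -> is_forest x.
Proof.
move=> S Hy v; have [k Hk] := Hy v; exists k.
have : iter k (obind x) (Some v) = None \/
       iter k (obind x) (Some v) = iter k (obind y) (Some v).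
  elim: k {Hk} => [|k [IH|IH]] /=; [by right|by left; rewrite IH|].
  by rewrite IH; case: (iter k _ _) => [u|] /=; [case: (S u) => ->; [left|right]|right].
by case=> ->.
Qed.

Lemma pruned_forest x t : is_forest t -> pruned x t -> is_forest x.
Proof. by move=> Ht [S _]; apply: sub_forest S Ht. Qed.

Lemma detach_forest y u : is_forest y -> is_forest (detach y u).
Proof. by apply: sub_forest => v; rewrite ffunE; case: eqP; [left|right]. Qed.

Lemma detach_cover y u w :
  is_forest y -> y u = Some w -> y w = None -> nap_cover (detach y u) y.
Proof.
move=> Hy Hyu Hyw; split; first exact: detach_forest.
have Nuw : u != w by apply/eqP => Euw; move: Hyu; rewrite Euw Hyw.
exists u, w; split=> //; first by rewrite ffunE eqxx.
  by rewrite ffunE eq_sym (negPf Nuw).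
by apply/ffunP => v; rewrite !ffunE; case: eqVneq => [->|].
Qed.

Lemma pruned_detach x y u : pruned x y -> x u = None -> pruned x (detach y u).
Proof.
move=> [S C] Hxu; split=> [v|v w]; rewrite ffunE.
  by case: eqVneq => [->|_]; [left|].
by case: eqP => // _; apply: C.
Qed.

(* Strip, one at a time, a topmost edge of [y] that [x] lacks; its head is
   then a root of [y]. *)
Lemma pruned_nap_le x y : is_forest y -> pruned x y -> nap_le x y.
Proof.
move Dn : #|[set v | (x v == None) && (y v != None)]| => n.
elim: n y Dn => [|n IH] y Dn Hy Hxy.
  have -> : x = y; last exact: rt_refl.
  apply/ffunP => v; case: Hxy => /(_ v) [] // Hxv _; rewrite Hxv.
  move/eqP: Dn; rewrite cards_eq0 => /eqP/setP/(_ v); rewrite !inE Hxv eqxx /=.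
  by case: (y v).
have [v0] : exists v0, v0 \in [set v | (x v == None) && (y v != None)].
  by apply/set0Pn; rewrite -card_gt0 Dn.
rewrite inE => /andP[/eqP Hxv0 /eqP Hyv0].
have [u [_ [Hxu Hyu] Htop]] :=
  topmost_below Hy (P := fun u => x u = None /\ y u <> None) (conj Hxv0 Hyv0).
case Eyu: (y u) Hyu => [w|] // _.
have Hxw : x w = None by case: Hxy => _ C; apply: C Eyu Hxu.
have Hyw : y w = None.
  by case Eyw: (y w) => //; exfalso; apply: (Htop w Eyu); rewrite Eyw.
apply: (@rt_trans _ _ _ (detach y u)); last exact/rt_step/(detach_cover Hy Eyu Hyw).
apply: IH (detach_forest _ Hy) (pruned_detach Hxy Hxu).
move: Dn; rewrite (cardsD1 u) inE Hxu Eyu /= add1n => -[<-].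
apply: eq_card => v; rewrite !inE ffunE.
by case: (eqVneq v u) => [->|Nvu]; rewrite ?eqxx ?andbF.
Qed.

Lemma in_intervalE t x : is_forest t -> in_interval t x <-> pruned x t.
Proof.
move=> Ht; split=> [[_ [_ /nap_le_pruned //]]|Hxt].
have Hx := pruned_forest Ht Hxt.
split=> //; split; last exact: pruned_nap_le.
by apply: pruned_nap_le => //; split=> [v|v w _ _]; rewrite ffunE //; left.
Qed.

Lemma nap_le_roots t x y : is_forest t -> pruned x t -> pruned y t ->
  nap_le x y <-> (forall v, y v = None -> x v = None).
Proof.
move=> Ht Hxt Hyt; split=> [/nap_le_pruned [S _] v Hyv|Hroots].
  by case: (S v) => ->.
apply: pruned_nap_le (pruned_forest Ht Hyt) _; split=> [v|v w Hyv].
  case Hyv: (y v) => [w|]; last by left; apply: Hroots.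
  case: Hxt => /(_ v) [|->]; [by left|right].
  by rewrite -(pruned_sub Hyt) ?Hyv.
have Htv : t v = Some w by rewrite -(pruned_sub Hyt) ?Hyv.
by case: Hxt => _ C; apply: C Htv.
Qed.

End Pruning.

Section Branches.
Variables (I : finType) (t : pfun I).
Hypothesis forest_t : is_forest t.
Implicit Types x y : pfun I.

Definition branch (v : I) : pfun I := [ffun u => if `[< below t u v >] then t u else None].

Lemma branch_pruned v : pruned (branch v) t.
Proof.
split=> [u|a b Hab]; rewrite !ffunE; first by case: asboolP; [right|left].
case: asboolP => [_|Nav]; first by rewrite Hab.
by case: asboolP => // Hbv; case: Nav; apply: below_trans (below_parent Hab) Hbv.
Qed.

Lemma pruned_kept_below x u v : pruned x t -> x v <> None -> below t u v -> x u <> None.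
Proof.
move=> [_ C] Hxv [k]; elim: k u => [|k IH] u; first by case=> ->.
rewrite iterSr /=; case Etu: (t u) => [w|]; last by rewrite iter_obind_None.
by move=> /IH Hxw Hxu; apply: Hxw; apply: C Etu Hxu.
Qed.

Lemma branch_le x v : pruned x t -> x v <> None -> nap_le (branch v) x.
Proof.
move=> Hx Hxv; apply/(nap_le_roots forest_t (branch_pruned v) Hx) => u Hxu.
by rewrite ffunE; case: asboolP => // /(pruned_kept_below Hx Hxv).
Qed.

Lemma branch_leE u v : t u <> None -> nap_le (branch u) (branch v) <-> below t u v.
Proof.
move=> Htu; split=> [|Huv].
  move/(nap_le_roots forest_t (branch_pruned u) (branch_pruned v)) => Hroots.
  have := Hroots u; rewrite !ffunE; case: (asboolP (below t u v)) => // _.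
  by case: (asboolP (below t u u)) => [_ /(_ erefl)/Htu //|[]]; apply: below_refl.
apply: branch_le (branch_pruned v) _.
by rewrite ffunE; case: asboolP.
Qed.

Lemma branch_inj u v : t u <> None -> t v <> None -> branch u = branch v -> u = v.
Proof.
move=> Htu Htv Euv; apply: (below_anti forest_t).
  by apply/(branch_leE v Htu); rewrite Euv; apply: rt_refl.
by apply/(branch_leE u Htv); rewrite Euv; apply: rt_refl.
Qed.

Lemma detach_top_pruned x v :
  pruned x t -> (forall w, t v = Some w -> x w = None) -> pruned (detach x v) t.
Proof.
move=> [S C] Htop; split=> [u|a b Hab]; rewrite !ffunE.
  by case: eqP => _; [left|apply: S].
case: (eqVneq a v) => [Eav|_] Ha; first by subst a; case: eqP => // _; apply: Htop.
by case: eqP => // _; apply: C Hab Ha.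
Qed.

(* In a finite lattice, having a greatest strict lower bound is join-irreducibility. *)
Definition join_irr x : Prop :=
  in_interval t x /\ exists m, [/\ in_interval t m, nap_le m x, m <> x &
    forall y, in_interval t y -> nap_le y x -> y <> x -> nap_le y m].

Lemma branch_join_irr v : t v <> None -> join_irr (branch v).
Proof.
move=> Htv; have Bv := branch_pruned v.
have Bvv : branch v v = t v by rewrite ffunE; case: asboolP => // [[]]; apply: below_refl.
have Hm : pruned (detach (branch v) v) t.
  apply: detach_top_pruned => // w Htvw; rewrite ffunE; case: asboolP => // Hwv.
  have Ewv := below_anti forest_t Hwv (below_parent Htvw).
  by exfalso; move: Htvw; rewrite Ewv; apply: (parent_neq forest_t).
split; first exact/(in_intervalE _ forest_t).
exists (detach (branch v) v); split.
- exact/(in_intervalE _ forest_t).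
- apply/(nap_le_roots forest_t Hm Bv) => u Hu.
  by rewrite ffunE Hu; case: eqP.
- move/(congr1 (fun x : pfun I => x v)); rewrite ffunE eqxx Bvv => Htv0.
  by apply: Htv; rewrite -Htv0.
move=> y /(in_intervalE _ forest_t) Hy Hyv Nyv.
apply/(nap_le_roots forest_t Hy Hm) => u; rewrite ffunE.
case: (eqVneq u v) => [->|_] Hu; last exact: (proj1 (nap_le_roots forest_t Hy Bv) Hyv).
case Eyv: (y v) => [a|] //; case: Nyv; apply: nap_le_anti Hyv _.
by apply: branch_le; rewrite ?Eyv.
Qed.

Lemma join_irr_is_branch x : join_irr x -> exists2 v, t v <> None & x = branch v.
Proof.
move=> [/(in_intervalE _ forest_t) Hx [m [/(in_intervalE _ forest_t) Hm Hmx Nmx Hmax]]].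
have Nxm : ~ nap_le x m by move=> Hxm; apply: Nmx; apply: nap_le_anti.
have [u0 Hxu0] : exists u0, x u0 <> None.
  case: (pickP (fun u => x u != None)) => [u0 /eqP|Hnone]; first by exists u0.
  case: Nxm; apply/(nap_le_roots forest_t Hx Hm) => u _.
  by move: (Hnone u) => /= /negbFE/eqP.
have [v [_ Hxv Htop]] := topmost_below forest_t (P := fun u => x u <> None) Hxu0.
have Htv : t v <> None by rewrite -(pruned_sub Hx Hxv).
have Htop' w : t v = Some w -> x w = None.
  by move=> /Htop Nxw; case Exw: (x w) => //; case: Nxw; rewrite Exw.
(* Unless [x = branch v], both [branch v] and [detach x v] lie strictly below [x],
   hence below [m]; but together they cover [x]. *)
exists v => //; case: (eqVneq x (branch v)) => // Nxb; exfalso; apply: Nxm.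
have Hd := detach_top_pruned Hx Htop'.
have Hdm : nap_le (detach x v) m.
  apply: Hmax; first exact/(in_intervalE _ forest_t).
    by apply/(nap_le_roots forest_t Hd Hx) => u Hu; rewrite ffunE Hu; case: eqP.
  by move/(congr1 (fun y : pfun I => y v)); rewrite ffunE eqxx => /esym.
have Hbm : nap_le (branch v) m.
  apply: Hmax; [exact/(in_intervalE _ forest_t)/branch_pruned | exact: branch_le |].
  by move=> Ebx; move: Nxb; rewrite Ebx eqxx.
move/(nap_le_roots forest_t Hd Hm): Hdm => Hdm.
move/(nap_le_roots forest_t (branch_pruned v) Hm): Hbm => Hbm.
apply/(nap_le_roots forest_t Hx Hm) => u Hmu; have := Hdm u Hmu; rewrite ffunE.
case: (eqVneq u v) => [Euv _|//]; have := Hbm u Hmu.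
by rewrite Euv ffunE; case: asboolP => // [[]]; apply: below_refl.
Qed.

End Branches.

Lemma rooted_tree_root (I : finType) (t : pfun I) :
  is_rooted_tree t -> exists r, forall v, t v = None <-> v = r.
Proof.
move=> [_ /eqP/cards1P [r Hr]]; exists r => v.
move/setP: Hr => /(_ v); rewrite !inE => Ev.
split=> [Etv|Evr]; apply/eqP; first by rewrite -Ev Etv.
by rewrite Ev Evr.
Qed.

Lemma below_root (I : finType) (t : pfun I) u r :
  is_rooted_tree t -> t r = None -> below t u r.
Proof.
move=> Ht Htr; have [r' Hr'] := rooted_tree_root Ht.
have [u' [Huu' _ Hu']] := topmost_below (proj1 Ht) (P := fun _ => True) (v := u) Logic.I.
have Htu' : t u' = None by case Etu': (t u') => [w|] //; case: (Hu' w Etu').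
by rewrite (proj1 (Hr' r) Htr) -(proj1 (Hr' u') Htu').
Qed.

Lemma parent_transport (I I' : finType) (t : pfun I) (t' : pfun I') (s : I -> I') :
  is_forest t -> is_forest t' -> bijective s ->
  (forall u v, below t u v <-> below t' (s u) (s v)) ->
  forall v, t' (s v) = omap s (t v).
Proof.
move=> Ht Ht' [s' K K'] Hs v.
have Hparent a b : t a = Some b <-> t' (s a) = Some (s b).
  rewrite (parentE Ht) (parentE Ht'); split=> -[Hab Nab Hmin]; split; first exact/Hs.
  - by move=> Esab; apply: Nab; rewrite -(K a) Esab K.
  - move=> u'; rewrite -(K' u') => /Hs/Hmin Hu Nu; apply/Hs/Hu => Eu; apply: Nu.
    by rewrite Eu.
  - exact/Hs.
  - by move=> Eab; apply: Nab; rewrite Eab.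
  - move=> u /Hs/Hmin Hu Nu; apply/Hs/Hu => Eu; apply: Nu.
    by rewrite -(K u) Eu K.
case Etv: (t v) => [w|]; first exact/Hparent.
case Et'v: (t' (s v)) => [z|] //.
by move: Et'v; rewrite -(K' z) => /Hparent; rewrite Etv.
Qed.

Definition interval_isom (I I' : finType) (t : pfun I) (t' : pfun I')
    (f : pfun I -> pfun I') (g : pfun I' -> pfun I) : Prop :=
  [/\ (forall x, in_interval t x -> in_interval t' (f x) /\ g (f x) = x),
      (forall y, in_interval t' y -> in_interval t (g y) /\ f (g y) = y) &
      (forall x y, in_interval t x -> in_interval t y ->
         (nap_le x y <-> nap_le (f x) (f y)))].

Section IntervalIsomorphism.
Variables (I I' : finType) (t : pfun I) (t' : pfun I').
Variables (f : pfun I -> pfun I') (g : pfun I' -> pfun I).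
Hypothesis fg_isom : interval_isom t t' f g.

Lemma interval_isom_sym : interval_isom t' t g f.
Proof.
have [Hf Hg Hord] := fg_isom; split=> // x y Hx Hy.
have [Hgx Egx] := Hg x Hx; have [Hgy Egy] := Hg y Hy.
by rewrite Hord // Egx Egy.
Qed.

Lemma join_irr_transport x : join_irr t x -> join_irr t' (f x).
Proof.
have [Hf Hg Hord] := fg_isom.
move=> [Hx [m [Hm Hmx Nmx Hmax]]]; split; first exact: (Hf x Hx).1.
exists (f m); split; first exact: (Hf m Hm).1.
- exact/(Hord m x Hm Hx).
- by move=> Efmx; apply: Nmx; rewrite -(Hf m Hm).2 -(Hf x Hx).2 Efmx.
move=> y' Hy' Hy'x Ny'x; have [Hy Ey] := Hg y' Hy'.
rewrite -Ey; apply/(Hord _ _ Hy Hm); apply: Hmax => //.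
  by apply/(Hord _ _ Hy Hx); rewrite Ey.
by move=> Egx; apply: Ny'x; rewrite -Ey Egx.
Qed.

Definition lifts_branch (v : I) (v' : I') : Prop :=
  (t v = None <-> t' v' = None) /\ (t v <> None -> f (branch t v) = branch t' v').

Definition lifts_branches (s : I -> I') : Prop := forall v, lifts_branch v (s v).

Lemma lifts_branches_exist :
  is_forest t -> is_rooted_tree t' -> exists s, lifts_branches s.
Proof.
move=> Ht Ht'; have [r' Hr'] := rooted_tree_root Ht'.
apply: (@fin_all_exists _ (fun=> I') lifts_branch) => v.
case Etv: (t v) => [w|]; last first.
  by exists r'; split=> //; split=> // _; apply/Hr'.
have Htv : t v <> None by rewrite Etv.
have := join_irr_transport (branch_join_irr Ht Htv).
move=> /(join_irr_is_branch (proj1 Ht')) [v' Ht'v' Efv].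
by exists v'; split=> //; split=> // /Ht'v'.
Qed.

Lemma lifts_branches_below (s : I -> I') :
  is_rooted_tree t -> is_rooted_tree t' -> lifts_branches s ->
  forall u v, below t u v <-> below t' (s u) (s v).
Proof.
move=> Ht Ht' Hs u v; have [_ _ Hord] := fg_isom.
have [Hsv Efv] := Hs v; have [Hsu Efu] := Hs u.
case Etv: (t v) => [a|]; last by split=> _; apply: below_root; rewrite -?Hsv.
have Htv : t v <> None by rewrite Etv.
have Ht'v : t' (s v) <> None by rewrite -Hsv.
case Etu: (t u) => [b|]; last first.
  split=> [/(below_from_root Etu) Evu|]; first by case: Htv; rewrite Evu.
  by move/(below_from_root (proj1 Hsu Etu)) => Evu; case: Ht'v; rewrite Evu -Hsu.
have Htu : t u <> None by rewrite Etu.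
have Ht'u : t' (s u) <> None by rewrite -Hsu.
rewrite -(branch_leE (proj1 Ht) v Htu) -(branch_leE (proj1 Ht') (s v) Ht'u) -Efu // -Efv //.
by apply: Hord; apply/(in_intervalE _ (proj1 Ht))/branch_pruned.
Qed.

End IntervalIsomorphism.

Lemma lifts_branches_cancel (I I' : finType) (t : pfun I) (t' : pfun I') f g s s' :
  is_rooted_tree t -> interval_isom t t' f g ->
  lifts_branches t t' f s -> lifts_branches t' t g s' -> cancel s s'.
Proof.
move=> Ht [Hf _ _] Hs Hs' v; have [r Hr] := rooted_tree_root Ht.
have [Hsv Efv] := Hs v; have [Hssv Egsv] := Hs' (s v).
case Etv: (t v) => [a|]; last first.
  by rewrite (proj1 (Hr _) (proj1 Hssv (proj1 Hsv Etv))) (proj1 (Hr v) Etv).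
have Htv : t v <> None by rewrite Etv.
have Ht'sv : t' (s v) <> None by rewrite -Hsv.
apply: (branch_inj (proj1 Ht)) => //; first by rewrite -Hssv.
rewrite -Egsv // -Efv //; apply: (Hf _ _).2.
exact/(in_intervalE _ (proj1 Ht))/branch_pruned.
Qed.

Lemma interval_iso_rooted_tree_iso (I I' : finType) (t : pfun I) (t' : pfun I') :
  is_rooted_tree t -> is_rooted_tree t' -> interval_iso t t' -> rooted_tree_iso t t'.
Proof.
move=> Ht Ht' [f [g fg_isom]]; have gf_isom := interval_isom_sym fg_isom.
have [s Hs] := lifts_branches_exist fg_isom (proj1 Ht) Ht'.
have [s' Hs'] := lifts_branches_exist gf_isom (proj1 Ht') Ht.
have bij_s : bijective s.
  by exists s'; [exact: lifts_branches_cancel Ht fg_isom Hs Hs'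
                |exact: lifts_branches_cancel Ht' gf_isom Hs' Hs].
exists s; split=> //; apply: (parent_transport (proj1 Ht) (proj1 Ht') bij_s).
exact: (lifts_branches_below fg_isom Ht Ht' Hs).
Qed.

Section Relabelling.
Variables (I I' : finType) (s : I -> I') (s' : I' -> I).
Hypotheses (K : cancel s s') (K' : cancel s' s).

Definition relabel (x : pfun I) : pfun I' := [ffun v' => omap s (x (s' v'))].

Lemma relabel_roots (x y : pfun I) :
  (forall v, y v = None -> x v = None) <->
  (forall v', relabel y v' = None -> relabel x v' = None).
Proof.
split=> [Hxy v'|Hxy v Hyv].
  by rewrite !ffunE; case Ey: (y (s' v')) => //= _; rewrite Hxy.
by have := Hxy (s v); rewrite !ffunE K Hyv => /(_ erefl); case: (x v).
Qed.

Lemma relabel_pruned (t : pfun I) (t' : pfun I') (x : pfun I) :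
  (forall v, t' (s v) = omap s (t v)) -> pruned x t -> pruned (relabel x) t'.
Proof.
move=> Hs [S C]; split=> [v'|a' b'].
  rewrite !ffunE -[t' v'](congr1 t' (K' v')) Hs.
  by case: (S (s' v')) => ->; [left|right].
rewrite !ffunE -[t' a'](congr1 t' (K' a')) Hs; case Ea: (t (s' a')) => [b|] //= [<-].
by case Ex: (x (s' a')) => //= _; rewrite K (C _ _ Ea Ex).
Qed.

End Relabelling.

Lemma relabelK (I I' : finType) (s : I -> I') (s' : I' -> I) :
  cancel s s' -> cancel (relabel s s') (relabel s' s).
Proof.
by move=> K x; apply/ffunP => v; rewrite !ffunE K; case: (x v) => //= a; rewrite K.
Qed.

Lemma rooted_tree_iso_interval_iso (I I' : finType) (t : pfun I) (t' : pfun I') :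
  is_forest t -> is_forest t' -> rooted_tree_iso t t' -> interval_iso t t'.
Proof.
move=> Ht Ht' [s [[s' K K'] Hs]].
have Hs' v' : t (s' v') = omap s' (t' v').
  by rewrite -[t' v'](congr1 t' (K' v')) Hs; case: (t (s' v')) => //= a; rewrite K.
exists (relabel s s'), (relabel s' s); split.
- move=> x /(in_intervalE _ Ht) Hx; split; last exact: relabelK.
  exact/(in_intervalE _ Ht')/(relabel_pruned K K' Hs).
- move=> y /(in_intervalE _ Ht') Hy; split; last exact: relabelK.
  exact/(in_intervalE _ Ht)/(relabel_pruned K' K Hs').
move=> x y /(in_intervalE _ Ht) Hx /(in_intervalE _ Ht) Hy.
rewrite (nap_le_roots Ht Hx Hy).
rewrite (nap_le_roots Ht' (relabel_pruned K K' Hs Hx) (relabel_pruned K K' Hs Hy)).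
exact: relabel_roots.
Qed.

Theorem proposition6p6 (I I' : finType) (t : pfun I) (t' : pfun I') :
  is_rooted_tree t -> is_rooted_tree t' ->
  (interval_iso t t' <-> rooted_tree_iso t t').
Proof.
move=> Ht Ht'; split; first exact: interval_iso_rooted_tree_iso.
exact: rooted_tree_iso_interval_iso (proj1 Ht) (proj1 Ht').
Qed.
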